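(* Let $\mathcal{M}=(E,\rho)$ be a $q$-matroid and $V\le E$. (a) $\dim V-\rho(V)=\dim\mathrm{cyc}(V)-\rho(\mathrm{cyc}(V))$. (b) If $V=\mathrm{cyc}(V)\oplus W$, then $\rho(V)=\rho(\mathrm{cyc}(V))+\dim W$ and $\dim W=\rho(W)$, i.e. $W$ is independent.
   Context: Let $\mathbb{F}=\mathbb{F}_q$. A $q$-matroid is $\mathcal{M}=(E,\rho)$, $E$ a finite-dimensional $\mathbb{F}$-vector space, $\rho$ from subspaces to $\mathbb{Z}_{\ge0}$ with $0\le\rho(V)\le\dim V$, monotone and submodular. Independent: $\rho(V)=\dim V$. Cyclic core: $\mathrm{cyc}(V)=\{x\in V\mid\rho(W)=\rho(V)\text{ for all }W\le V\text{ with }W+\langle x\rangle=V\}$ (a subspace of $V$). *)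

From mathcomp Require Import all_boot all_algebra.
From mathcomp Require Import boolp.
Set Implicit Arguments. Unset Strict Implicit. Unset Printing Implicit Defensive.
Local Open Scope ring_scope.

(* E = 'rV[F]_n, a finite-dimensional vector space over the finite field F = F_q.
   Subspaces are {vspace 'rV[F]_n}; a rank function is rho : {vspace _} -> nat. *)

Definition qmatroid (F : finFieldType) (n : nat) (rho : {vspace 'rV[F]_n} -> nat) : Prop :=
  [/\ (forall V, (rho V <= \dim V)%N),
      (forall V W, (V <= W)%VS -> (rho V <= rho W)%N) &
      (forall V W, (rho (V + W)%VS + rho (V :&: W)%VS <= rho V + rho W)%N)].

Definition in_cyc (F : finFieldType) (n : nat) (rho : {vspace 'rV[F]_n} -> nat)
    (V : {vspace 'rV[F]_n}) (x : 'rV[F]_n) : Prop :=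
  x \in V /\
  forall W : {vspace 'rV[F]_n}, (W <= V)%VS -> (W + <[x]>)%VS = V -> rho W = rho V.

(* cyc(V), as a subspace: the span of the set of elements satisfying in_cyc
   (this set is itself a subspace, so the span is exactly that set). *)
Definition cyc (F : finFieldType) (n : nat) (rho : {vspace 'rV[F]_n} -> nat)
    (V : {vspace 'rV[F]_n}) : {vspace 'rV[F]_n} :=
  <<[seq x <- enum 'rV[F]_n | `[< in_cyc rho V x >]]>>%VS.

(* Let the nullity of a subspace be [\dim V - rho V]. Submodularity makes the
   nullity monotone, so [cyc V <= V] gives one inequality. For the other, shrink
   a subspace [U] with [cyc V <= U <= V] as long as it contains some [x] outside
   the cyclic core: such an [x] comes with a hyperplane [W] of [V] missing [x] and
   of smaller rank, which contains [cyc V]; submodularity applied to [U + W = V]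
   shows that passing to [U :&: W] does not decrease the nullity. The descent
   ends at [cyc V]. For (b), equal nullities and [\dim V = \dim (cyc V) + \dim W]
   give [rho V = rho (cyc V) + \dim W], and submodularity for [cyc V + W = V]
   then forces [rho W >= \dim W]. *)

From mathcomp Require Import all_boot all_algebra.
From mathcomp Require Import boolp.
From mathcomp Require Import zify.
Set Implicit Arguments. Unset Strict Implicit. Unset Printing Implicit Defensive.
Local Open Scope ring_scope.

Section Hyperplanes.
Variables (K : fieldType) (vT : vectType K).
Implicit Types (V W : {vspace vT}) (x : vT).

Lemma dimv_addv_line_proper V W x :
  (W + <[x]>)%VS = V -> W != V -> \dim V = (\dim W).+1.
Proof.
move=> defV neWV.
have WV : (W <= V)%VS by rewrite -defV addvSl.
have ltWV : (\dim W < \dim V)%N by rewrite (ltn_leqif (dimv_leqif_eq WV)).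
have [le_sum _] := dimv_add_leqif W <[x]>.
move: le_sum; rewrite defV dim_vline; case: (x != 0) => /=; lia.
Qed.

Lemma addv_line_hyperplane V W x :
  (W <= V)%VS -> (\dim W).+1 = \dim V -> x \in V -> x \notin W ->
  (W + <[x]>)%VS = V.
Proof.
move=> WV dimW xV xW; apply/eqP; rewrite eqEdim subv_add WV -memvE xV -dimW /=.
rewrite (ltn_leqif (dimv_leqif_eq (addvSl W <[x]>))).
apply: contra xW => /eqP ->.
by rewrite memvE addvSr.
Qed.

End Hyperplanes.

Section Nullity.
Variables (K : fieldType) (vT : vectType K) (rho : {vspace vT} -> nat).
Implicit Types (U V W : {vspace vT}).

Definition nullity V : int := (\dim V)%:Z - (rho V)%:Z.

Hypothesis rho_le_dim : forall V, (rho V <= \dim V)%N.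
Hypothesis rho_submod :
  forall V W, (rho (V + W)%VS + rho (V :&: W)%VS <= rho V + rho W)%N.

Lemma nullityS U V : (U <= V)%VS -> nullity U <= nullity V.
Proof.
move=> UV; rewrite /nullity.
have := rho_submod (V :\: U) U; rewrite addv_diff (addv_idPl UV).
have := dimv_cap_compl V U; rewrite (capv_idPr UV).
have := rho_le_dim (V :\: U); lia.
Qed.

Lemma nullity_cap_hyperplane U V W :
  (U + W)%VS = V -> (\dim W).+1 = \dim V -> (rho W < rho V)%N ->
  nullity U <= nullity (U :&: W).
Proof.
move=> defV dimW rhoW; rewrite /nullity.
have := rho_submod U W; have := dimv_sum_cap U W; rewrite defV; lia.
Qed.

Lemma nullity_eq_compl_free C V W :
  (C + W)%VS = V -> (C :&: W = 0)%VS -> nullity C = nullity V ->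
  rho V = (rho C + \dim W)%N /\ \dim W = rho W.
Proof.
move=> defV capCW; rewrite /nullity => eq_nullity.
have := dimv_disjoint_sum capCW; have := rho_submod C W.
rewrite defV capCW; have := rho_le_dim W; lia.
Qed.

End Nullity.

Section CyclicCore.
Variables (F : finFieldType) (n : nat) (rho : {vspace 'rV[F]_n} -> nat).
Implicit Types (U V W : {vspace 'rV[F]_n}) (x : 'rV[F]_n).

Hypothesis rho_le_dim : forall V, (rho V <= \dim V)%N.
Hypothesis rho_mono : forall V W, (V <= W)%VS -> (rho V <= rho W)%N.
Hypothesis rho_submod :
  forall V W, (rho (V + W)%VS + rho (V :&: W)%VS <= rho V + rho W)%N.

Lemma cyc_subv V : (cyc rho V <= V)%VS.
Proof. by apply/span_subvP => x; rewrite mem_filter => /andP[/asboolP[]]. Qed.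

Lemma in_cyc_memv V x : in_cyc rho V x -> x \in cyc rho V.
Proof.
by move=> cyc_x; apply: memv_span; rewrite mem_filter mem_enum andbT; apply/asboolP.
Qed.

Lemma notin_cyc_hyperplane V x : x \in V -> x \notin cyc rho V ->
  exists W, [/\ (W + <[x]>)%VS = V, (\dim W).+1 = \dim V & (rho W < rho V)%N].
Proof.
move=> xV /negP x_cyc.
have /existsNP[W] : ~ forall W, (W <= V)%VS -> (W + <[x]>)%VS = V -> rho W = rho V.
  by move=> cyc_x; apply: x_cyc; apply: in_cyc_memv.
move=> /not_implyP[WV /not_implyP[defV /eqP rhoW]]; exists W; split=> //.
  by apply/esym/(dimv_addv_line_proper defV); apply: contraNneq rhoW => ->.
by rewrite ltn_neqAle rhoW rho_mono.
Qed.

Lemma cyc_subv_hyperplane V W :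
  (W <= V)%VS -> (\dim W).+1 = \dim V -> rho W != rho V -> (cyc rho V <= W)%VS.
Proof.
move=> WV dimW rhoW; apply/span_subvP => y.
rewrite mem_filter => /andP[/asboolP[yV cyc_y] _].
apply: contraNT rhoW => yW; apply/eqP/cyc_y => //.
exact: addv_line_hyperplane.
Qed.

Lemma nullity_le_cyc V U :
  (cyc rho V <= U)%VS -> (U <= V)%VS -> nullity rho U <= nullity rho (cyc rho V).
Proof.
have [k] := ubnP (\dim U); elim: k U => // k IHk U dimU cycU UV.
have [Ucyc | /subvPn[x xU x_cyc]] := boolP (U <= cyc rho V)%VS.
  by have -> : U = cyc rho V by apply/eqP; rewrite eqEsubv Ucyc cycU.
have [W [defV dimW rhoW]] := notin_cyc_hyperplane (subvP UV x xU) x_cyc.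
have WV : (W <= V)%VS by rewrite -defV addvSl.
have defUW : (U + W)%VS = V.
  by apply/eqP; rewrite eqEsubv subv_add UV WV -{1}defV addvC addvS.
have cycUW : (cyc rho V <= U :&: W)%VS.
  by rewrite subv_cap cycU cyc_subv_hyperplane // neq_ltn rhoW.
have dimUW : (\dim (U :&: W) < k)%N.
  by have := dimv_sum_cap U W; rewrite defUW; lia.
have := IHk _ dimUW cycUW (subv_trans (capvSl U W) UV).
have := nullity_cap_hyperplane rho_submod defUW dimW rhoW; lia.
Qed.

Lemma nullity_cyc V : nullity rho (cyc rho V) = nullity rho V.
Proof.
have := nullityS rho_le_dim rho_submod (cyc_subv V).
have := nullity_le_cyc (cyc_subv V) (subvv V); lia.
Qed.

End CyclicCore.

Theorem proposition3p10 (F : finFieldType) (n : nat)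
    (rho : {vspace 'rV[F]_n} -> nat) (V : {vspace 'rV[F]_n}) :
  qmatroid rho ->
  ((\dim V)%:Z - (rho V)%:Z = (\dim (cyc rho V))%:Z - (rho (cyc rho V))%:Z)%R /\
  (forall W : {vspace 'rV[F]_n},
     (cyc rho V + W)%VS = V -> (cyc rho V :&: W)%VS = 0%VS ->
     rho V = (rho (cyc rho V) + \dim W)%N /\ \dim W = rho W).
Proof.
case=> rho_le_dim rho_mono rho_submod.
have eq_nullity := nullity_cyc rho_le_dim rho_mono rho_submod V.
split; first exact: esym eq_nullity.
by move=> W defV capW; apply: nullity_eq_compl_free.
Qed.
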